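(* For $0\le i,j\le n-1$, $n\in\mathbb{N}$ and $a,q>0$, $$\frac{Z^{\mathrm{col}}(i,j,a,q,n)}{Z^{\mathrm{col}}_n(a,q)}=\frac{1}{(2\pi\mathrm{i})^2}\int_{\Gamma_0}\int_{\Gamma_0}q^{(i+1)^2+j}\frac{G^{\mathrm{diag}}_{NE}(w,b,a,q)}{w^ib^j}\frac{dw}{w}\frac{db}{b},$$ where $\Gamma_0$ is a contour around the origin.
   Context: $\mathrm{i}=\sqrt{-1}$. Aztec diamond of size $n$: white vertices $\{(x_1,x_2): x_1\text{ odd},\ x_2\text{ even},\ 1\le x_1\le 2n-1,\ 0\le x_2\le 2n\}$, black vertices $\{(x_1,x_2): x_1\text{ even},\ x_2\text{ odd},\ 0\le x_1\le 2n,\ 1\le x_2\le 2n-1\}$, $e_1=(1,1)$, $e_2=(-1,1)$. The $q^{\mathrm{col}}$ weighting: for a black vertex $x=(x_1,x_2)$, the edges to $x\pm e_1$ have weight $1$, the edge to $x+e_2$ has weight $aq^{-2n+x_1-1}$ and the edge to $x-e_2$ has weight $aq^{2n-x_1}$. $Z^{\mathrm{col}}_n(a,q)$ is the sum over perfect matchings of products of weights, and $Z^{\mathrm{col}}(i,j,a,q,n)$ the same for the graph with vertices $(2n-2i-1,2n)$ and $(2n,2n-1-2j)$ removed. The $q^{\mathrm{diag}}$ weighting (with $b=1$): for $0\le k,l\le n-1$, edges $\{(2n-2k-2,2n-2l-1),(2n-2k-1,2n-2l)\}$ and $\{(2n-2k-1,2n-2l-2),(2n-2k,2n-2l-1)\}$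 have weight $1$, edge $\{(2n-2k-1,2n-2l),(2n-2k,2n-2l-1)\}$ has weight $aq^{-2\min(k,l)}$, and edge $\{(2n-2k-2,2n-2l-1),(2n-2k-1,2n-2l-2)\}$ has weight $aq^{2\min(k,l)+1}$; $Z^{\mathrm{diag}}_n(1,a,q)$ and $Z^{\mathrm{diag}}(i,j,a,q,n)$ are the corresponding partition functions (the latter with $(2n-2i-1,2n)$, $(2n,2n-2j-1)$ removed), and $G^{\mathrm{diag}}_{NE}(w,b,a,q)=\sum_{i,j=0}^{n-1}\frac{Z^{\mathrm{diag}}(i,j,a,q,n)}{Z^{\mathrm{diag}}_n(1,a,q)}w^ib^j$. *)

From Stdlib Require Import Reals.
From Coquelicot Require Import Coquelicot.
From mathcomp Require Import all_boot.

Set Implicit Arguments.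
Unset Strict Implicit.
Unset Printing Implicit Defensive.
Local Open Scope R_scope.

Definition pt (n : nat) : finType := ('I_(n.*2.+1) * 'I_(n.*2.+1))%type.

Definition mkpt (n x1 x2 : nat) : pt n := (inord x1, inord x2).

Definition whites (n : nat) : {set pt n} :=
  [set x : pt n | odd x.1 && ~~ odd x.2].
Definition blacks (n : nat) : {set pt n} :=
  [set x : pt n | ~~ odd x.1 && odd x.2].

(* relative position of a white vertex y w.r.t. a black vertex x,
   with e1 = (1,1), e2 = (-1,1) *)
Definition is_pe1 n (x y : pt n) : bool := (y.1 == x.1.+1 :> nat) && (y.2 == x.2.+1 :> nat).
Definition is_me1 n (x y : pt n) : bool := (y.1.+1 == x.1 :> nat) && (y.2.+1 == x.2 :> nat).
Definition is_pe2 n (x y : pt n) : bool := (y.1.+1 == x.1 :> nat) && (y.2 == x.2.+1 :> nat).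
Definition is_me2 n (x y : pt n) : bool := (y.1 == x.1.+1 :> nat) && (y.2.+1 == x.2 :> nat).

Definition adj n (x y : pt n) : bool :=
  [|| is_pe1 x y, is_me1 x y, is_pe2 x y | is_me2 x y].

Definition perfect_matching n (Bs Ws : {set pt n}) (M : {set pt n * pt n}) : bool :=
  [&& [forall e in M, [&& e.1 \in Bs, e.2 \in Ws & adj e.1 e.2]],
      [forall x in Bs, #|[set e in M | e.1 == x]| == 1%N] &
      [forall y in Ws, #|[set e in M | e.2 == y]| == 1%N]].

Definition partfun n (wt : pt n -> pt n -> R) (Bs Ws : {set pt n}) : R :=
  \big[Rplus/R0]_(M : {set pt n * pt n} | perfect_matching Bs Ws M)
     \big[Rmult/R1]_(e <- enum M) wt e.1 e.2.

Definition wcol n (a q : R) (x y : pt n) : R :=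
  if is_pe2 x y then (a * powerRZ q (- 2 * Z.of_nat n + Z.of_nat x.1 - 1)%Z)
  else if is_me2 x y then (a * powerRZ q (2 * Z.of_nat n - Z.of_nat x.1)%Z)
  else R1.

(* q^diag weighting with b = 1.  For a black vertex x = (x1,x2) write
   l = (2n-1-x2)/2.  Edge to x + e2 = {(2n-2k-1,2n-2l),(2n-2k,2n-2l-1)}
   with k = (2n-x1)/2 has weight a q^{-2 min(k,l)}; edge to x - e2 =
   {(2n-2k-2,2n-2l-1),(2n-2k-1,2n-2l-2)} with k = (2n-2-x1)/2 has weight
   a q^{2 min(k,l)+1}; edges to x +- e1 have weight 1. *)
Definition wdiag n (a q : R) (x y : pt n) : R :=
  let l := ((n.*2 - 1 - x.2)./2)%N in
  if is_pe2 x y then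
    (a * powerRZ q (- (2 * Z.of_nat (minn ((n.*2 - x.1)./2) l)))%Z)
  else if is_me2 x y then
    (a * powerRZ q (2 * Z.of_nat (minn ((n.*2 - 2 - x.1)./2) l) + 1)%Z)
  else R1.

Definition rem_white n (i : nat) : pt n := mkpt n (n.*2 - i.*2 - 1)%N n.*2.
Definition rem_black n (j : nat) : pt n := mkpt n n.*2 (n.*2 - 1 - j.*2)%N.

Arguments wcol : clear implicits.
Arguments wdiag : clear implicits.
Arguments rem_white : clear implicits.
Arguments rem_black : clear implicits.

Definition Zcol_n (n : nat) (a q : R) : R := partfun (wcol n a q) (blacks n) (whites n).
Definition Zcol (i j : nat) (a q : R) (n : nat) : R :=
  partfun (wcol n a q) (blacks n :\ rem_black n j) (whites n :\ rem_white n i).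

Definition Zdiag_n (n : nat) (a q : R) : R := partfun (wdiag n a q) (blacks n) (whites n).
Definition Zdiag (i j : nat) (a q : R) (n : nat) : R :=
  partfun (wdiag n a q) (blacks n :\ rem_black n j) (whites n :\ rem_white n i).

Definition GdiagNE (n : nat) (w b : C) (a q : R) : C :=
  \big[Cplus/RtoC 0]_(i < n) \big[Cplus/RtoC 0]_(j < n)
     Cmult (RtoC (Zdiag i j a q n / Zdiag_n n a q))
           (Cmult (Cpow w i) (Cpow b j)).

(* contour integral over the positively oriented circle |z| = r:
   \oint f(z) dz = \int_0^{2 pi} f(r e^{it}) i r e^{it} dt *)
Definition circ (r t : R) : C := (r * cos t, r * sin t).
Definition circle_integral (r : R) (f : C -> C) : C :=
  RInt (V := C_R_CompleteNormedModule)
       (fun t => Cmult (f (circ r t)) (Cmult Ci (circ r t))) 0 (2 * PI).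

(** The q^col and q^diag weightings are gauge equivalent: on every edge from a
    black vertex x to a white vertex y, wcol = q^(Φ x) q^(-Φ y) wdiag, where Φ
    depends only on the e1-diagonal of the vertex.  Every perfect matching covers
    each vertex exactly once, so the gauge factors out of all the partition
    functions, and after the two boundary vertices are removed the surviving
    factor is q^((i+1)^2 + j).  The double contour integral then extracts the
    coefficient of w^i b^j in the polynomial G_NE, since the integral of
    w^(k-l-1) over a circle around 0 is 2πi when k = l and 0 otherwise. *)

From Stdlib Require Import Reals Lia Lra ZArith.
From Coquelicot Require Import Coquelicot.
From mathcomp Require Import all_boot zify.
From HB Require Import structures.

HB.instance Definition _ :=
  Monoid.isComLaw.Build R R0 Rplus (fun x y z => esym (Rplus_assoc x y z)) Rplus_comm Rplus_0_l.
HB.instance Definition _ :=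
  Monoid.isComLaw.Build R R1 Rmult (fun x y z => esym (Rmult_assoc x y z)) Rmult_comm Rmult_1_l.
HB.instance Definition _ := Monoid.isMulLaw.Build R R0 Rmult Rmult_0_l Rmult_0_r.
HB.instance Definition _ :=
  Monoid.isAddLaw.Build R Rmult Rplus Rmult_plus_distr_r Rmult_plus_distr_l.
HB.instance Definition _ :=
  Monoid.isComLaw.Build C (RtoC 0) Cplus Cplus_assoc Cplus_comm Cplus_0_l.
HB.instance Definition _ :=
  Monoid.isComLaw.Build C (RtoC 1) Cmult Cmult_assoc Cmult_comm Cmult_1_l.
HB.instance Definition _ := Monoid.isMulLaw.Build C (RtoC 0) Cmult Cmult_0_l Cmult_0_r.
HB.instance Definition _ :=
  Monoid.isAddLaw.Build C Cmult Cplus Cmult_plus_distr_r Cmult_plus_distr_l.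

Local Open Scope R_scope.

Lemma big_fiber1 (T : Type) (idx : T) (op : Monoid.com_law idx) (I J : finType)
    (p : I -> J) (A : {set I}) (S : {set J}) (F : J -> T) :
  {in A, forall e, p e \in S} ->
  {in S, forall x, #|[set e in A | p e == x]| = 1%N} ->
  \big[op/idx]_(e in A) F (p e) = \big[op/idx]_(x in S) F x.
Proof.
move=> pA fiber1; rewrite (partition_big p (mem S)) //.
apply: eq_bigr => x xS; have /eqP/cards1P[e fiber_x] := fiber1 x xS.
have /[!inE] /andP[_ /eqP px] : e \in [set e in A | p e == x] by rewrite fiber_x set11.
rewrite (eq_bigl (fun e' => e' \in [set e])) ?big_set1 ?px // => e'.
by rewrite -fiber_x inE.
Qed.

Lemma big_matching n (Bs Ws : {set pt n}) M (f g : pt n -> R) :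
  perfect_matching Bs Ws M ->
  \big[Rmult/R1]_(e in M) (f e.1 * g e.2) =
  \big[Rmult/R1]_(x in Bs) f x * \big[Rmult/R1]_(y in Ws) g y.
Proof.
case/and3P=> /forallP edges /forallP blacks1 /forallP whites1.
rewrite big_split /=; congr (_ * _); apply: big_fiber1.
- by move=> e eM; have /implyP/(_ eM)/and3P[] := edges e.
- by move=> x xB; apply/eqP; have /implyP := blacks1 x; apply.
- by move=> e eM; have /implyP/(_ eM)/and3P[] := edges e.
- by move=> y yW; apply/eqP; have /implyP := whites1 y; apply.
Qed.

Lemma partfun_gauge n (wt1 wt2 : pt n -> pt n -> R) (f g : pt n -> R) (Bs Ws : {set pt n}) :
  (forall x y, x \in Bs -> y \in Ws -> adj x y -> wt1 x y = f x * g y * wt2 x y) ->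
  partfun wt1 Bs Ws =
  \big[Rmult/R1]_(x in Bs) f x * \big[Rmult/R1]_(y in Ws) g y * partfun wt2 Bs Ws.
Proof.
move=> gauge; rewrite /partfun big_distrr /=; apply: eq_bigr => M pmM.
rewrite !big_enum -(@big_matching _ _ _ _ f g pmM) -big_split /=; apply: eq_bigr => e eM.
have /and3P[/forallP edges _ _] := pmM.
by have /implyP/(_ eM)/and3P[eB eW eadj] := edges e; apply: gauge.
Qed.

(* [diag_index v] numbers the e1-diagonal through [v]: it is constant along the
   edges [x -- x +- e1] and drops (resp. rises) by one along [x -- x + e2]
   (resp. [x -- x - e2]).  [gauge_pot] is a discrete primitive, in the diagonal
   index, of the log_q-ratio of the e2-weights of the two weightings. *)
Definition diag_index {n} (v : pt n) : nat := (v.1 + n.*2 - 1 - v.2)./2.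

Definition gauge_pot (N s : Z) : Z :=
  if (s <=? N)%Z then ((N - s) * (N - s) - 1)%Z else (N - 1 - s)%Z.

Definition gauge_exp {n} (v : pt n) : Z := gauge_pot (Z.of_nat n) (Z.of_nat (diag_index v)).

Lemma gauge_pot_succ N s :
  gauge_pot N (s + 1) = (gauge_pot N s - 1 - 2 * Z.max 0 (N - s - 1))%Z.
Proof. by rewrite /gauge_pot; do 2 case: Z.leb_spec => ?; nia. Qed.

Lemma powerRZ_factor (q a : R) (e d e' : Z) : 0 < q -> e = (d + e')%Z ->
  a * powerRZ q e = powerRZ q d * (a * powerRZ q e').
Proof. by move=> q_gt0 ->; rewrite powerRZ_add; lra. Qed.

Lemma wcol_gauge n a q (x y : pt n) : 0 < q ->
  x \in blacks n -> y \in whites n -> adj x y ->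
  wcol n a q x y = powerRZ q (gauge_exp x) * powerRZ q (- gauge_exp y) * wdiag n a q x y.
Proof.
case: x y => [x1 x2] [y1 y2] q_gt0; rewrite !inE /= => /andP[ox1 ox2] /andP[oy1 oy2].
have := ltn_ord x1; have := ltn_ord x2; have := ltn_ord y1; have := ltn_ord y2.
rewrite /adj /wcol /wdiag /gauge_exp /diag_index -powerRZ_add; last lra.
case pe2: is_pe2; [|case me2: is_me2]; cbn [fst snd] => ? ? ? ? xy_adj.
- apply powerRZ_factor => //; move: pe2 => /andP[/eqP y1E /eqP y2E]; rewrite /= in y1E y2E.
  have -> : Z.of_nat (x1 + n.*2 - 1 - x2)./2 = (Z.of_nat (y1 + n.*2 - 1 - y2)./2 + 1)%Z by lia.
  rewrite gauge_pot_succ; lia.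
- apply powerRZ_factor => //; move: me2 => /andP[/eqP y1E /eqP y2E]; rewrite /= in y1E y2E.
  have -> : Z.of_nat (y1 + n.*2 - 1 - y2)./2 = (Z.of_nat (x1 + n.*2 - 1 - x2)./2 + 1)%Z by lia.
  rewrite gauge_pot_succ; lia.
- have -> : (y1 + n.*2 - 1 - y2)./2 = (x1 + n.*2 - 1 - x2)./2.
    by move: xy_adj; rewrite !orbF => /orP[] /andP[/eqP/= ? /eqP/= ?]; lia.
  by rewrite Z.add_opp_diag_r Rmult_1_r.
Qed.

Lemma rem_black_in n j : (j < n)%N -> rem_black n j \in blacks n.
Proof. by move=> j_lt; rewrite inE /rem_black /mkpt /= !inordK; lia. Qed.

Lemma rem_white_in n i : (i < n)%N -> rem_white n i \in whites n.
Proof. by move=> i_lt; rewrite inE /rem_white /mkpt /= !inordK; lia. Qed.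

Lemma gauge_exp_removed n i j : (i < n)%N -> (j < n)%N ->
  (gauge_exp (rem_white n i) - gauge_exp (rem_black n j))%Z = Z.of_nat ((i + 1) ^ 2 + j).
Proof.
move=> i_lt j_lt; rewrite /gauge_exp /diag_index /rem_white /rem_black /mkpt /= !inordK; try lia.
have -> : Z.of_nat (n.*2 - i.*2 - 1 + n.*2 - 1 - n.*2)./2 = (Z.of_nat n - 1 - Z.of_nat i)%Z by lia.
have -> : Z.of_nat (n.*2 + n.*2 - 1 - (n.*2 - 1 - j.*2))./2 = (Z.of_nat n + Z.of_nat j)%Z by lia.
rewrite /gauge_pot -mulnn; do 2 case: Z.leb_spec => ?; nia.
Qed.

Lemma big_powerRZ_gt0 (I : finType) (A : {set I}) (q : R) (e : I -> Z) : 0 < q ->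
  0 < \big[Rmult/R1]_(x in A) powerRZ q (e x).
Proof.
move=> q_gt0; apply: (big_ind (fun x => 0 < x)) => *; first lra.
  exact: Rmult_lt_0_compat.
exact: powerRZ_lt.
Qed.

Lemma Zcol_ratio i j a q n : (i < n)%N -> (j < n)%N -> 0 < q ->
  Zcol i j a q n / Zcol_n n a q =
  powerRZ q (Z.of_nat ((i + 1) ^ 2 + j)) * (Zdiag i j a q n / Zdiag_n n a q).
Proof.
move=> i_lt j_lt q_gt0.
have gauge_on (Bs Ws : {set pt n}) : Bs \subset blacks n -> Ws \subset whites n ->
    partfun (wcol n a q) Bs Ws =
    \big[Rmult/R1]_(x in Bs) powerRZ q (gauge_exp x)
    * \big[Rmult/R1]_(y in Ws) powerRZ q (- gauge_exp y) * partfun (wdiag n a q) Bs Ws.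
  move=> /subsetP sB /subsetP sW; apply: partfun_gauge => x y xB yW.
  by apply: wcol_gauge => //; [apply: sB | apply: sW].
rewrite /Zcol /Zcol_n /Zdiag /Zdiag_n !gauge_on ?subD1set ?subxx //.
rewrite (big_setD1 _ (rem_black_in n j j_lt)) (big_setD1 _ (rem_white_in n i i_lt)) /=.
rewrite -(gauge_exp_removed n i j i_lt j_lt) /Z.sub powerRZ_add ?powerRZ_neg'; last lra.
have := big_powerRZ_gt0 _ (blacks n :\ rem_black n j) q gauge_exp q_gt0.
have := big_powerRZ_gt0 _ (whites n :\ rem_white n i) q (fun y => - gauge_exp y)%Z q_gt0.
have := powerRZ_lt q (gauge_exp (rem_black n j)) q_gt0.
have := powerRZ_lt q (gauge_exp (rem_white n i)) q_gt0.
rewrite /Rdiv !Rinv_mult; set iZ := / partfun _ (blacks n) (whites n).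
by move=> *; field; do !split; apply: Rgt_not_eq.
Qed.

Lemma is_RInt_Cmult (c : C) (f : R -> C) (a b : R) (l : C) :
  is_RInt (V := C_R_CompleteNormedModule) f a b l ->
  is_RInt (V := C_R_CompleteNormedModule) (fun t => c * f t)%C a b (c * l)%C.
Proof.
move=> fl; have fl1 := is_RInt_fct_extend_fst _ _ _ _ fl.
have fl2 := is_RInt_fct_extend_snd _ _ _ _ fl.
case: c l fl fl1 fl2 => [cr ci] [lr li] /= _ fl1 fl2; apply: is_RInt_fct_extend_pair => /=.
- apply: (is_RInt_ext (fun t => plus (scal cr (f t).1) (opp (scal ci (f t).2)))).
    by move=> t _; rewrite /plus /opp /scal /= /mult /=; ring.
  by apply: is_RInt_plus; [|apply: is_RInt_opp]; apply: is_RInt_scal.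
- apply: (is_RInt_ext (fun t => plus (scal cr (f t).2) (scal ci (f t).1))).
    by move=> t _; rewrite /plus /scal /= /mult /=; ring.
  by apply: is_RInt_plus; apply: is_RInt_scal.
Qed.

Lemma is_RInt_big (I : Type) (s : seq I) (F : I -> R -> C) (L : I -> C) (a b : R) :
  (forall i, is_RInt (V := C_R_CompleteNormedModule) (F i) a b (L i)) ->
  is_RInt (V := C_R_CompleteNormedModule)
    (fun t => \big[Cplus/RtoC 0]_(i <- s) F i t) a b (\big[Cplus/RtoC 0]_(i <- s) L i).
Proof.
move=> FL; elim: s => [|i s IHs].
  apply: (is_RInt_ext (fun=> zero)) => [t _|]; first by rewrite big_nil.
  by rewrite big_nil; have := is_RInt_const (V := C_R_CompleteNormedModule) a b zero; rewrite scal_zero_r.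
apply: (is_RInt_ext (fun t => plus (F i t) (\big[Cplus/RtoC 0]_(j <- s) F j t))).
  by move=> t _; rewrite big_cons.
by rewrite big_cons; apply: is_RInt_plus.
Qed.

Definition expi (k : Z) (t : R) : C := (cos (IZR k * t), sin (IZR k * t)).

Lemma expi_add (k l : Z) (t : R) : (expi k t * expi l t)%C = expi (k + l) t.
Proof.
by rewrite /expi plus_IZR Rmult_plus_distr_r cos_plus sin_plus /Cmult /=; f_equal; ring.
Qed.

Lemma expi0 (t : R) : expi 0 t = 1.
Proof. by rewrite /expi Rmult_0_l cos_0 sin_0. Qed.

Lemma expi_neq0 (k : Z) (t : R) : expi k t <> 0.
Proof.
move=> k0; have := expi_add k (- k) t.
by rewrite k0 Cmult_0_l Z.add_opp_diag_r expi0 => /pair_equal_spec[] /=; lra.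
Qed.

Lemma circ_expi (r t : R) : circ r t = (r * expi 1 t)%C.
Proof. by rewrite /circ /expi /Cmult /= !Rmult_1_l; f_equal; ring. Qed.

Lemma Cpow_circ (r t : R) (k : nat) : (circ r t ^ k)%C = (RtoC (r ^ k) * expi (Z.of_nat k) t)%C.
Proof.
elim: k => [|k IHk]; first by rewrite expi0 Cmult_1_l.
rewrite Cpow_S IHk circ_expi Nat2Z.inj_succ -Z.add_1_l -expi_add /=.
by rewrite RtoC_mult; ring.
Qed.

Lemma circ_neq0 (r t : R) : r <> 0 -> circ r t <> 0.
Proof.
by move=> r0; rewrite circ_expi; apply: Cmult_neq_0; [move/RtoC_inj | apply: expi_neq0].
Qed.

Lemma sin_int_2PI (k : Z) : sin (IZR k * (2 * PI)) = 0.
Proof. by apply: sin_eq_0_1; exists (2 * k)%Z; rewrite mult_IZR; ring. Qed.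

Lemma cos_int_2PI (k : Z) : cos (IZR k * (2 * PI)) = 1.
Proof.
rewrite (_ : IZR k * (2 * PI) = 2 * (IZR k * PI)); last by ring.
by rewrite cos_2a_sin (sin_eq_0_1 (IZR k * PI)); [ring | exists k].
Qed.

Lemma is_RInt_expi (k : Z) :
  is_RInt (V := C_R_CompleteNormedModule) (expi k) 0 (2 * PI)
    (if (k =? 0)%Z then RtoC (2 * PI) else 0).
Proof.
case: Z.eqb_spec => [->|k0].
  apply: (is_RInt_ext (fun=> RtoC 1)) => [t _|]; first by rewrite expi0.
  have := is_RInt_const (V := C_R_CompleteNormedModule) 0 (2 * PI) (RtoC 1).
  by rewrite /scal /= /prod_scal /scal /= /mult /= Rminus_0_r Rmult_1_r Rmult_0_r.
have k0R : IZR k <> 0 by apply: not_0_IZR.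
apply: is_RInt_fct_extend_pair => /=.
- have := is_RInt_derive (fun t => sin (IZR k * t) / IZR k) (fun t => cos (IZR k * t)) 0 (2 * PI).
  rewrite /minus /plus /opp /= sin_int_2PI Rmult_0_r sin_0 Rdiv_0_l Ropp_0 Rplus_0_r.
  apply=> t _; last by apply: ex_derive_continuous; auto_derive.
  by auto_derive => //; field.
- have := is_RInt_derive (fun t => - cos (IZR k * t) / IZR k) (fun t => sin (IZR k * t)) 0 (2 * PI).
  rewrite /minus /plus /opp /= cos_int_2PI Rmult_0_r cos_0 Rplus_opp_r.
  apply=> t _; last by apply: ex_derive_continuous; auto_derive.
  by auto_derive => //; field.
Qed.

Definition is_circle_integral (r : R) (f : C -> C) (l : C) : Prop :=
  is_RInt (V := C_R_CompleteNormedModule)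
    (fun t => f (circ r t) * (Ci * circ r t))%C 0 (2 * PI) l.

Lemma is_circle_integral_unique (r : R) (f : C -> C) (l : C) :
  is_circle_integral r f l -> circle_integral r f = l.
Proof. exact: is_RInt_unique. Qed.

Lemma is_circle_integral_ext (r : R) (f g : C -> C) (l : C) : r <> 0 ->
  is_circle_integral r f l -> (forall w : C, w <> 0 -> f w = g w) ->
  is_circle_integral r g l.
Proof.
move=> r0 fl fg; apply: is_RInt_ext fl => t _.
by rewrite fg //; apply: circ_neq0.
Qed.

Lemma is_circle_integral_scal (r : R) (c : C) (f : C -> C) (l : C) :
  is_circle_integral r f l -> is_circle_integral r (fun w => c * f w)%C (c * l)%C.
Proof.
move=> fl; apply: (is_RInt_ext (fun t => c * (f (circ r t) * (Ci * circ r t)))%C).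
  by move=> t _; rewrite Cmult_assoc.
exact: is_RInt_Cmult.
Qed.

Lemma is_circle_integral_big (I : Type) (s : seq I) (r : R) (F : I -> C -> C) (L : I -> C) :
  (forall i, is_circle_integral r (F i) (L i)) ->
  is_circle_integral r (fun w => \big[Cplus/RtoC 0]_(i <- s) F i w)
    (\big[Cplus/RtoC 0]_(i <- s) L i).
Proof.
move=> FL; apply: (is_RInt_ext (fun t => \big[Cplus/RtoC 0]_(i <- s) (F i (circ r t) * (Ci * circ r t))%C)).
  by move=> t _; rewrite big_distrl.
exact: is_RInt_big.
Qed.

Lemma is_circle_integral_monomial (r : R) (k l : nat) : r <> 0 ->
  is_circle_integral r (fun w => w ^ k / w ^ l / w)%C
    (if k == l then RtoC (2 * PI) * Ci else 0)%C.
Proof.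
move=> r0; pose c := (Ci * RtoC (r ^ k / r ^ l))%C.
have on_circle t : (circ r t ^ k / circ r t ^ l / circ r t * (Ci * circ r t))%C
                   = (c * expi (Z.of_nat k - Z.of_nat l) t)%C.
  have w0 := circ_neq0 r t r0; have el0 := @expi_neq0 (Z.of_nat l) t.
  have rl0 : RtoC (r ^ l) <> 0 by move/RtoC_inj; apply: pow_nonzero.
  rewrite /c !Cpow_circ RtoC_div; last exact: pow_nonzero.
  rewrite -[in LHS](Z.sub_add (Z.of_nat l) (Z.of_nat k)) -expi_add.
  by field.
apply: (is_RInt_ext (fun t => c * expi (Z.of_nat k - Z.of_nat l) t)%C) => [t _|].
  by rewrite on_circle.
have -> : (if k == l then RtoC (2 * PI) * Ci else 0)%C
          = (c * if (Z.of_nat k - Z.of_nat l =? 0)%Z then RtoC (2 * PI) else 0)%C.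
  case: eqP => kl; last by rewrite (proj2 (Z.eqb_neq _ _)) ?Cmult_0_r // => /Zminus_eq/Nat2Z.inj.
  rewrite /c -kl Z.sub_diag Rdiv_diag; last exact: pow_nonzero.
  by rewrite Cmult_1_r Cmult_comm.
apply: is_RInt_Cmult; exact: is_RInt_expi.
Qed.

Lemma is_circle_integral_laurent n (r : R) (c : 'I_n -> C) (l : 'I_n) : r <> 0 ->
  is_circle_integral r (fun w => \big[Cplus/RtoC 0]_(k < n) (c k * (w ^ k / w ^ l / w)))%C
    (RtoC (2 * PI) * Ci * c l)%C.
Proof.
move=> r0; set I := (RtoC (2 * PI) * Ci)%C.
have -> : (I * c l)%C = \big[Cplus/RtoC 0]_(k < n) (c k * if k == l then I else 0)%C.
  rewrite (bigD1 l) //= eqxx big1 ?Cplus_0_r; first exact: Cmult_comm.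
  by move=> k /negbTE ->; rewrite Cmult_0_r.
apply: is_circle_integral_big => k; apply: is_circle_integral_scal.
exact: is_circle_integral_monomial.
Qed.

Lemma circle_integral_coef2 n (r1 r2 : R) (c : 'I_n -> 'I_n -> C) (i0 j0 : 'I_n)
    (P : C -> C -> C) : r1 <> 0 -> r2 <> 0 ->
  (forall w b, P w b = \big[Cplus/RtoC 0]_(i < n) \big[Cplus/RtoC 0]_(j < n)
                         (c i j * (w ^ i * b ^ j)))%C ->
  circle_integral r2 (fun b => circle_integral r1 (fun w =>
    P w b / (w ^ i0 * b ^ j0) / w / b)%C)
  = ((RtoC (2 * PI) * Ci) ^ 2 * c i0 j0)%C.
Proof.
move=> r10 r20 Pdef; set I := (RtoC (2 * PI) * Ci)%C.
have inner (b : C) : b <> 0 ->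
    circle_integral r1 (fun w => P w b / (w ^ i0 * b ^ j0) / w / b)%C
    = (I * \big[Cplus/RtoC 0]_(j < n) (c i0 j * (b ^ j / b ^ j0 / b)))%C.
  move=> b0; apply: is_circle_integral_unique.
  apply: (is_circle_integral_ext _ _ _ _ r10 (is_circle_integral_laurent _ _
    (fun i => \big[Cplus/RtoC 0]_(j < n) (c i j * (b ^ j / b ^ j0 / b)))%C i0 r10)) => w w0.
  rewrite Pdef /Cdiv !big_distrl; apply: eq_bigr => i _; rewrite !big_distrl.
  by apply: eq_bigr => j _ /=; field; do !split => //; apply: Cpow_nz.
rewrite (_ : (I ^ 2 * c i0 j0 = I * (I * c i0 j0))%C); last by ring.
apply: is_circle_integral_unique.
apply: (is_circle_integral_ext _ _ _ _ r20
  (is_circle_integral_laurent _ _ (fun j => I * c i0 j)%C j0 r20)) => b b0.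
by rewrite inner // big_distrr; apply: eq_bigr => j _; rewrite -Cmult_assoc.
Qed.

Theorem lemma5p4 (n i j : nat) (a q r1 r2 : R) :
  (i < n)%N -> (j < n)%N -> (0 < a)%R -> (0 < q)%R ->
  (0 < r1)%R -> (0 < r2)%R ->
  RtoC (Zcol i j a q n / Zcol_n n a q)%R =
  Cmult (Cinv (Cpow (Cmult (RtoC (2 * PI)) Ci) 2))
    (circle_integral r2 (fun b =>
       circle_integral r1 (fun w =>
         Cdiv (Cdiv
           (Cdiv (Cmult (RtoC (powerRZ q (Z.of_nat ((i + 1) ^ 2 + j))))
                        (GdiagNE n w b a q))
                 (Cmult (Cpow w i) (Cpow b j)))
           w) b))).
Proof.
move=> i_lt j_lt _ q_gt0 r1_gt0 r2_gt0.
rewrite Zcol_ratio // RtoC_mult; move: (RtoC (powerRZ q _)) => Q.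
rewrite (circle_integral_coef2 n r1 r2
  (fun i' j' => Q * RtoC (Zdiag i' j' a q n / Zdiag_n n a q))%C (Ordinal i_lt) (Ordinal j_lt));
  try lra.
- rewrite /=; field; split; first exact: Ci_nz.
  by move/RtoC_inj; have := PI_RGT_0; lra.
- move=> w b; rewrite /GdiagNE big_distrr; apply: eq_bigr => i' _.
  by rewrite big_distrr; apply: eq_bigr => j' _; rewrite -Cmult_assoc.
Qed.
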